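(* Let $\alpha,\beta,\gamma\in\mathbb{Z}[i]$ satisfy $\alpha^2+\beta^2+\gamma^2=0$, $\alpha\beta\gamma\neq0$, $\gcd(\alpha,\beta,\gamma)\in U$, and suppose $\alpha=i^m\alpha'$, $\beta=i^n(1+i)^{2+k}\beta'$, $\gamma=i^l\gamma'$ where $m,n,l\in\{0,1\}$, $k\ge0$ is an integer, and $\alpha',\beta',\gamma'\in O^I$. Then $m+l\equiv1\pmod 2$.
   Context: $\mathbb{Z}[i]$ is the ring of Gaussian integers, $U=\{1,-1,i,-i\}$ its unit group; $R(\alpha),I(\alpha)$ are real and imaginary parts. $O=\{\alpha: R(\alpha)+I(\alpha)\equiv1\pmod 2\}$, $O^I=\{\alpha\in O: R(\alpha)\equiv 1\pmod 4\}$. *)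

From Stdlib Require Import ZArith Arith.
Open Scope Z_scope.

Record GI : Type := mkGI { re : Z ; im : Z }.

Definition gzero : GI := mkGI 0 0.
Definition gone  : GI := mkGI 1 0.
Definition gI    : GI := mkGI 0 1.
Definition gadd (a b : GI) : GI := mkGI (re a + re b) (im a + im b).
Definition gopp (a : GI) : GI := mkGI (- re a) (- im a).
Definition gmul (a b : GI) : GI :=
  mkGI (re a * re b - im a * im b) (re a * im b + im a * re b).
Fixpoint gpow (a : GI) (n : nat) : GI :=
  match n with O => gone | S n' => gmul a (gpow a n') end.

Definition gdvd (d a : GI) : Prop := exists q : GI, a = gmul d q.

Definition gunit (u : GI) : Prop :=
  u = gone \/ u = gopp gone \/ u = gI \/ u = gopp gI.

Definition gcd3_unit (a b c : GI) : Prop :=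
  forall d : GI, gdvd d a -> gdvd d b -> gdvd d c -> gunit d.

Definition inO (a : GI) : Prop := (re a + im a) mod 2 = 1.
Definition inOI (a : GI) : Prop := inO a /\ re a mod 4 = 1.

(* Compare real parts modulo 4. For x in O^I, the real part of x^2 is 1 mod 4,
   and multiplying x by i only changes the sign of the real part of x^2. Since
   2 divides (1+i)^(2+k), the real part of beta^2 is 0 mod 4. Hence the real
   part of alpha^2 + beta^2 + gamma^2 is congruent to (-1)^m + (-1)^l mod 4,
   which is +-2, not 0, when m and l have the same parity. *)
From Stdlib Require Import ZArith Lia.
Open Scope Z_scope.

Lemma gdvd_mull (d a x : GI) : gdvd d a -> gdvd d (gmul x a).
Proof.
  intros [q ->]; exists (gmul x q).
  unfold gmul; cbn [re im]; f_equal; ring.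
Qed.

Lemma gdvd_mulr (d a x : GI) : gdvd d a -> gdvd d (gmul a x).
Proof.
  intros [q ->]; exists (gmul q x).
  unfold gmul; cbn [re im]; f_equal; ring.
Qed.

Lemma gdvd_2_gpow_1pi (k : nat) : gdvd (mkGI 2 0) (gpow (mkGI 1 1) (2 + k)).
Proof.
  exists (gmul gI (gpow (mkGI 1 1) k)); cbn [gpow Nat.add].
  unfold gmul, gI; cbn [re im]; f_equal; ring.
Qed.

Lemma re_sq_mod4_of_2dvd (b : GI) : gdvd (mkGI 2 0) b -> re (gmul b b) mod 4 = 0.
Proof.
  intros [[x y] ->]; cbn [gmul re im].
  replace (_ - _) with (4 * (x * x - y * y)) by ring.
  now rewrite Z.mul_comm, Z_mod_mult.
Qed.

Lemma re_sq_mod4_OI (x : GI) : inOI x -> re (gmul x x) mod 4 = 1.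
Proof.
  destruct x as [p q]; unfold inOI, inO; cbn [gmul re im]; intros [Hpq Hp].
  assert (Hdecomp : exists s t, p = 4 * s + 1 /\ q = 2 * t).
  { exists (p / 4), (q / 2); Z.to_euclidean_division_equations; lia. }
  destruct Hdecomp as (s & t & -> & ->).
  replace (_ - _) with (4 * (4 * s * s + 2 * s - t * t) + 1) by ring.
  now rewrite Z.add_comm, Z.mul_comm, Z_mod_plus_full.
Qed.

Lemma re_sq_gI_mul (g x : GI) :
  re (gmul (gmul (gmul gI g) x) (gmul (gmul gI g) x)) = - re (gmul (gmul g x) (gmul g x)).
Proof. cbn [gmul gI re im]; ring. Qed.

Lemma re_sq_gpow_gI_mul (m : nat) (x : GI) :
  re (gmul (gmul (gpow gI m) x) (gmul (gpow gI m) x)) =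
  if Nat.even m then re (gmul x x) else - re (gmul x x).
Proof.
  induction m as [|m IH].
  - cbn [gpow gmul gone re im Nat.even]; ring.
  - cbn [gpow]; rewrite re_sq_gI_mul, IH, Nat.even_succ, <- Nat.negb_even.
    destruct (Nat.even m); cbn [negb]; ring.
Qed.

Theorem lemma4p2 (a b c a' b' c' : GI) (m n l k : nat) :
  gadd (gadd (gmul a a) (gmul b b)) (gmul c c) = gzero ->
  gmul (gmul a b) c <> gzero ->
  gcd3_unit a b c ->
  (m <= 1)%nat -> (n <= 1)%nat -> (l <= 1)%nat ->
  a = gmul (gpow gI m) a' ->
  b = gmul (gmul (gpow gI n) (gpow (mkGI 1 1) (2 + k))) b' ->
  c = gmul (gpow gI l) c' ->
  inOI a' -> inOI b' -> inOI c' ->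
  Nat.modulo (m + l) 2 = 1%nat.
Proof.
  intros Hsum _ _ Hm _ Hl -> Hb -> Ha' _ Hc'.
  apply (f_equal re) in Hsum; cbn [gadd gzero re] in Hsum.
  rewrite !re_sq_gpow_gI_mul in Hsum.
  assert (Hb4 : re (gmul b b) mod 4 = 0).
  { apply re_sq_mod4_of_2dvd; rewrite Hb.
    apply gdvd_mulr, gdvd_mull, gdvd_2_gpow_1pi. }
  pose proof (re_sq_mod4_OI _ Ha') as Ha4; pose proof (re_sq_mod4_OI _ Hc') as Hc4.
  destruct m as [|[|]], l as [|[|]]; cbn [Nat.even] in Hsum; try reflexivity; exfalso;
    Z.to_euclidean_division_equations; lia.
Qed.
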